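(* For all integers $M,N,p\ge1$, $$\delta_p(M,N)=\frac{1}{(MN)^p}\sum_{\substack{\pi,\sigma\in P(p)\\ \pi\triangleright\sigma}}\frac{M!}{(M-|\pi|)!}\cdot\frac{N!}{(N-|\sigma|)!},$$ where $\frac{M!}{(M-s)!}$ is interpreted as $0$ when $s>M$ (and similarly for $N$).
   Context: $P(p)$ is the set of partitions of $\{1,\dots,p\}$, and $|\pi|$ is the number of blocks of $\pi$. For $\pi,\sigma\in P(p)$, write $\pi\triangleright\sigma$ if for every block $\beta$ of $\pi$ and every block $\gamma$ of $\sigma$, $\#\{x\in\{1,\dots,p\}:x\in\beta,\ x\in\gamma\}=\#\{x\in\{1,\dots,p\}:x\in\beta,\ x+1\in\gamma\}$, indices taken modulo $p$ (so $p+1=1$). For integers $M,N,p\ge1$, $\delta_p(M,N)=\frac{1}{(MN)^p}\#\{(a,b)\in\mathbb Z_M^p\times\mathbb Z_N^p:\{(a_y,b_y)\}_{y=1}^p=\{(a_y,b_{y+1})\}_{y=1}^p\text{ as multisets}\}$, with $b_{p+1}=b_1$. *)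

From HB Require Import structures.
From mathcomp Require Import all_boot all_order all_algebra.
Set Implicit Arguments. Unset Strict Implicit. Unset Printing Implicit Defensive.
Import Order.TTheory GRing.Theory Num.Theory.

(* The ground set {1,...,p} is represented by 'I_p = {0,...,p-1} (x <-> x+1);
   the cyclic successor x |-> x+1 (mod p) is [ordS x]. *)

Definition Part (p : nat) :=
  [set P : {set {set 'I_p}} | partition P [set: 'I_p]].

Definition tri (p : nat) (pi sigma : {set {set 'I_p}}) : bool :=
  [forall beta in pi, forall gamma in sigma,
     #|[set x : 'I_p | (x \in beta) && (x \in gamma)]| ==
     #|[set x : 'I_p | (x \in beta) && (ordS x \in gamma)]| ].

Definition delta_count (p M N : nat) : nat :=
  #|[set ab : {ffun 'I_p -> 'I_M} * {ffun 'I_p -> 'I_N} |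
      perm_eq [seq (ab.1 y, ab.2 y) | y <- enum 'I_p]
              [seq (ab.1 y, ab.2 (ordS y)) | y <- enum 'I_p] ]|.

Definition delta (p M N : nat) : rat :=
  (delta_count p M N)%:R / ((M * N) ^ p)%N%:R.

From HB Require Import structures.
From mathcomp Require Import all_boot all_order all_algebra.
Import Order.TTheory GRing.Theory Num.Theory.

(* For (a, b), the multiplicity of (u, v) on each side of the multiset
   equation is the size of a block intersection of the kernel partitions
   ker a := preim_partition a and ker b, taken without resp. with the cyclic
   shift; blocks of the kernels are exactly the fibres over the images, so
   the equation holds iff ker a |> ker b.  Grouping the pairs (a, b) by their
   kernels then gives the formula, since exactly M ^_ #|pi| maps into an
   M-set have kernel pi (they are the injections from the blocks of pi). *)

Lemma eq_preim_partition (T : finType) (rT1 rT2 : eqType)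
    (f : T -> rT1) (g : T -> rT2) (D : {set T}) :
  (forall x y, (f x == f y) = (g x == g y)) ->
  preim_partition f D = preim_partition g D.
Proof.
move=> eq_fg; apply: eq_imset => x.
by apply/setP => y; rewrite !inE eq_fg.
Qed.

Section FunctionsWithKernel.

Variables (T R : finType) (P : {set {set T}}).
Hypothesis partP : partition P [set: T].

Let block := {B : {set T} | B \in P}.

Lemma mem_cover x : x \in cover P.
Proof. by rewrite (cover_partition partP) in_setT. Qed.

Definition block_of (x : T) : block := exist _ (pblock P x) (pblock_mem (mem_cover x)).

Lemma block_of_surj (B : block) : exists x, block_of x == B.
Proof.
case: B => B PB; have [_ tiP notP0] := and3P partP.
have /set0Pn [x Bx] : B != set0 by apply: contraNneq notP0 => <-.
by exists x; rewrite -val_eqE /= (def_pblock tiP PB Bx).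
Qed.

Definition lift_blocks (g : {ffun block -> R}) : {ffun T -> R} :=
  [ffun x => g (block_of x)].

Lemma lift_blocks_inj : injective lift_blocks.
Proof.
move=> g1 g2 eq_g; apply/ffunP => B; have [x /eqP <-] := block_of_surj B.
by have /ffunP/(_ x) := eq_g; rewrite !ffunE.
Qed.

Lemma preim_partition_lift_blocks (g : {ffun block -> R}) :
  injective g -> preim_partition (lift_blocks g) setT = P.
Proof.
move=> inj_g; rewrite -[RHS](preim_partition_pblock partP).
by apply: eq_preim_partition => x y; rewrite !ffunE (inj_eq inj_g) -val_eqE.
Qed.

Lemma preim_partition_eq_pblock (f : T -> R) x y :
  preim_partition f setT = P -> (f x == f y) = (y \in pblock P x).
Proof.
move=> <-; rewrite pblock_equivalence_partition ?in_setT //.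
by move=> u v w _ _ _; split=> // /eqP ->.
Qed.

Lemma lift_blocks_preim_partition (f : {ffun T -> R}) :
  preim_partition f setT = P ->
  exists2 g : {ffun block -> R}, injective g & f = lift_blocks g.
Proof.
move=> kerf; pose g := [ffun B => f (xchoose (block_of_surj B))].
have g_block x : g (block_of x) = f x.
  rewrite ffunE; apply/eqP; rewrite (preim_partition_eq_pblock _ _ _ kerf).
  have /eqP/(congr1 val) /= -> := xchooseP (block_of_surj (block_of x)).
  by rewrite mem_pblock mem_cover.
exists g; last by apply/ffunP => x; rewrite ffunE g_block.
move=> B1 B2; have [x1 /eqP <-] := block_of_surj B1.
have [x2 /eqP <-] := block_of_surj B2.
rewrite !g_block => /eqP; rewrite (preim_partition_eq_pblock _ _ _ kerf) => x2x1.
apply: val_inj => /=; apply/esym/same_pblock => //.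
by have [] := and3P partP.
Qed.

Lemma card_ffuns_preim_partition :
  #|[set f : {ffun T -> R} | preim_partition f setT == P]| = #|R| ^_ #|P|.
Proof.
have -> : [set f : {ffun T -> R} | preim_partition f setT == P] =
          lift_blocks @: [set g : {ffun block -> R} | injectiveb g].
  apply/setP => f; rewrite inE; apply/eqP/imsetP => [/lift_blocks_preim_partition|].
    by case=> g inj_g ->; exists g; rewrite // inE; apply/injectiveP.
  by case=> g /[!inE] /injectiveP inj_g ->; apply: preim_partition_lift_blocks.
rewrite card_imset; last exact: lift_blocks_inj.
by rewrite card_inj_ffuns card_sig; congr (_ ^_ _); apply: eq_card.
Qed.

End FunctionsWithKernel.

Lemma sum_ffun_preim_partition (T R : finType) (F : {set {set T}} -> nat) :
  \sum_(f : {ffun T -> R}) F (preim_partition f setT) =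
  \sum_(P | partition P [set: T]) #|R| ^_ #|P| * F P.
Proof.
rewrite (partition_big (fun f : {ffun T -> R} => preim_partition f setT)
                      (fun P => partition P [set: T])) /=;
  last by move=> f _; apply: preim_partitionP.
apply: eq_bigr => P partP; rewrite (eq_bigr (fun=> F P)) => [|f /eqP -> //].
by rewrite sum_nat_cond_const card_ffuns_preim_partition.
Qed.

Section PairMultisets.

Variables (p : nat) (T1 T2 : eqType) (a : 'I_p -> T1) (b : 'I_p -> T2).

Lemma count_mem_pairs (s : 'I_p -> 'I_p) u v :
  count_mem (u, v) [seq (a y, b (s y)) | y <- enum 'I_p] =
  #|[set y | (u == a y) && (v == b (s y))]|.
Proof.
rewrite count_map cardE size_filter count_filter.
by apply: eq_count => y; rewrite /= !inE andbT xpair_eqE eq_sym [v == _]eq_sym.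
Qed.

Lemma tri_preim_partitionE :
  tri (preim_partition a setT) (preim_partition b setT) =
  [forall x, forall z,
     #|[set y | (a x == a y) && (b z == b y)]| ==
     #|[set y | (a x == a y) && (b z == b (ordS y))]|].
Proof.
have blocksE x z (s : 'I_p -> 'I_p) :
    #|[set y | (y \in [set y in setT | a x == a y]) &&
               (s y \in [set y in setT | b z == b y])]| =
    #|[set y | (a x == a y) && (b z == b (s y))]|.
  by apply: eq_card => y; rewrite !inE.
apply/forall_inP/forallP => [tri_ab x | fibers_eq _ /imsetP[x _ ->]].
  apply/forallP => z.
  have /forall_inP/(_ _ (imset_f _ (in_setT z))) := tri_ab _ (imset_f _ (in_setT x)).
  by rewrite (blocksE x z id) blocksE.
apply/forall_inP => _ /imsetP[z _ ->].
by rewrite (blocksE x z id) blocksE; exact: (forallP (fibers_eq x) z).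
Qed.

Lemma perm_eq_shift_tri :
  perm_eq [seq (a y, b y) | y <- enum 'I_p] [seq (a y, b (ordS y)) | y <- enum 'I_p]
  = tri (preim_partition a setT) (preim_partition b setT).
Proof.
rewrite tri_preim_partitionE; apply/idP/forallP => [/permP same_counts x | fibers_eq].
  apply/forallP => z; have := same_counts (pred1 (a x, b z)).
  by rewrite (count_mem_pairs id) count_mem_pairs => ->.
apply/allP => _ /[!mem_cat] /orP[] /mapP[y _ ->] /=;
  by rewrite (count_mem_pairs id) count_mem_pairs (forallP (fibers_eq y)).
Qed.

End PairMultisets.

Lemma delta_count_sum_tri p M N :
  delta_count p M N =
  \sum_(a : {ffun 'I_p -> 'I_M}) \sum_(b : {ffun 'I_p -> 'I_N})
     tri (preim_partition a setT) (preim_partition b setT).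
Proof.
rewrite /delta_count pair_big /= -sum1_card big_mkcond /=; apply: eq_bigr => ab _.
by rewrite inE perm_eq_shift_tri; case: tri.
Qed.

Lemma delta_count_partitions p M N :
  delta_count p M N =
  \sum_(pi in Part p) \sum_(sigma in Part p | tri pi sigma) M ^_ #|pi| * N ^_ #|sigma|.
Proof.
rewrite delta_count_sum_tri.
under [LHS]eq_bigr => a _ do
  rewrite (sum_ffun_preim_partition _ _ (fun sigma => tri (preim_partition a setT) sigma)).
rewrite (sum_ffun_preim_partition
  _ _ (fun pi => \sum_(sigma | partition sigma setT) #|'I_N| ^_ #|sigma| * tri pi sigma)).
apply: eq_big => [pi | pi _]; first by rewrite inE.
rewrite big_distrr [RHS]big_mkcondr /=; apply: eq_big => [sigma | sigma _]; first by rewrite inE.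
by rewrite !card_ord; case: tri; rewrite ?muln1 ?muln0 ?mulnA.
Qed.

Local Open Scope ring_scope.

Theorem proposition7p1 (M N p : nat) (hM : (1 <= M)%N) (hN : (1 <= N)%N)
    (hp : (1 <= p)%N) :
  delta p M N =
  (((M * N) ^ p)%N%:R)^-1 *
    \sum_(pi in Part p) \sum_(sigma in Part p | tri pi sigma)
        ((M ^_ #|pi|) * (N ^_ #|sigma|))%N%:R.
Proof.
rewrite /delta delta_count_partitions natr_sum mulrC; congr (_ * _).
by apply: eq_bigr => pi _; rewrite natr_sum.
Qed.
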